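(* Let $f:\mathbb{N}\to\mathbb{R}$ with $f(1)=1$ be multiplicative (i.e. $f(mn)=f(m)f(n)$ for coprime $m,n$). Assume there exist $C>0$ and $\gamma\in\mathbb{R}$ such that $|f(n)|\leq C n^\gamma$ for all $n\geq 2$. Then $|f^{-1}(n)| \leq n^{\gamma+\frac{\ln(1+C)}{\ln 2}}$ for all $n\geq2$.
   Context: $f^{-1}$ denotes the Dirichlet inverse of $f$: the arithmetic function with $\sum_{d\mid n} f(n/d) f^{-1}(d)=\varepsilon(n)$ for all $n$, where $\varepsilon(1)=1$ and $\varepsilon(n)=0$ for $n\ge2$. *)

From HB Require Import structures.
From mathcomp Require Import all_boot all_order all_algebra.
From mathcomp Require Import reals exp.
Set Implicit Arguments. Unset Strict Implicit. Unset Printing Implicit Defensive.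
Import Order.TTheory GRing.Theory Num.Theory.
Local Open Scope ring_scope.

(* Arithmetic functions are f : nat -> R; only positive arguments matter. *)

Definition arith_multiplicative (R : realType) (f : nat -> R) : Prop :=
  f 1%N = 1 /\
  forall m n : nat, (0 < m)%N -> (0 < n)%N -> coprime m n ->
    f (m * n)%N = f m * f n.

Definition dconv (R : realType) (f g : nat -> R) (n : nat) : R :=
  \sum_(d <- divisors n) f (n %/ d)%N * g d.

Definition is_dirichlet_inverse (R : realType) (f g : nat -> R) : Prop :=
  forall n : nat, (0 < n)%N -> dconv f g n = (n == 1%N)%:R.

From HB Require Import structures.
From mathcomp Require Import all_boot all_order all_algebra.
From mathcomp Require Import reals exp.
From mathcomp Require Import zify.
Set Implicit Arguments. Unset Strict Implicit. Unset Printing Implicit Defensive.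
Import Order.TTheory GRing.Theory Num.Theory.

(* The Dirichlet inverse g of a multiplicative f is again multiplicative, and
   so is n |-> n ^ e; hence it suffices to bound g at prime powers.  There
   f * g = eps gives g (p ^ a) = - \sum_(i < a) f (p ^ (a - i)) g (p ^ i), and
   since C * \sum_(i < a) (1 + C) ^ i = (1 + C) ^ a - 1, induction on a yields
   |g (p ^ a)| <= (1 + C) ^ a (p ^ a) ^ gamma.  Finally
   (1 + C) ^ a = 2 ^ (a ln (1 + C) / ln 2) <= (p ^ a) ^ (ln (1 + C) / ln 2). *)

Lemma divisors_mul m k : 0 < m -> 0 < k -> coprime m k ->
  perm_eq (divisors (m * k)) [seq d1 * d2 | d1 <- divisors m, d2 <- divisors k].
Proof.
move=> m_gt0 k_gt0 co_mk; have mk_gt0 : 0 < m * k by rewrite muln_gt0 m_gt0.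
apply: uniq_perm; first exact: divisors_uniq.
  apply: allpairs_uniq; try exact: divisors_uniq.
  move=> [d1 d2] [e1 e2] /allpairsP[[x1 x2] /= [dvd_x1 dvd_x2 [-> ->]]].
  move=> /allpairsP[[y1 y2] /= [dvd_y1 dvd_y2 [-> ->]]] /= eq_xy.
  rewrite -!dvdn_divisors // in dvd_x1 dvd_x2 dvd_y1 dvd_y2.
  have co_x1y2 : coprime x1 y2 by apply: coprime_dvdl dvd_x1 (coprime_dvdr dvd_y2 co_mk).
  have co_y1x2 : coprime y1 x2 by apply: coprime_dvdl dvd_y1 (coprime_dvdr dvd_x2 co_mk).
  have eq_x1y1 : x1 = y1.
    apply/eqP; rewrite eqn_dvd -(Gauss_dvdl _ co_x1y2) -eq_xy dvdn_mulr //=.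
    by rewrite -(Gauss_dvdl _ co_y1x2) eq_xy dvdn_mulr.
  subst y1.
  have x1_gt0 : 0 < x1 by apply: dvdn_gt0 m_gt0 dvd_x1.
  by move/eqP: eq_xy; rewrite eqn_pmul2l // => /eqP ->.
move=> d; rewrite -dvdn_divisors //; apply/idP/allpairsP => [dvd_d|].
  exists (gcdn d m, gcdn d k); rewrite /= -!dvdn_divisors // !dvdn_gcdr.
  split=> //; apply/eqP; rewrite eqn_dvd Gauss_dvd ?dvdn_gcdl //=; last first.
    exact: coprime_dvdl (dvdn_gcdr d m) (coprime_dvdr (dvdn_gcdr d k) co_mk).
  rewrite muln_gcdl !muln_gcdr !dvdn_gcd dvd_d.
  by rewrite (dvdn_mull m (dvdnn d)) !(dvdn_mulr _ (dvdnn d)).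
by move=> [[d1 d2] /= [dvd_d1 dvd_d2 ->]]; rewrite dvdn_mul // dvdn_divisors.
Qed.

Lemma divisors_pfactor p a : prime p ->
  perm_eq (divisors (p ^ a)) [seq p ^ i | i <- iota 0 a.+1].
Proof.
move=> p_pr; have p_gt1 := prime_gt1 p_pr.
apply: uniq_perm; first exact: divisors_uniq.
  by rewrite map_inj_in_uniq ?iota_uniq // => i j _ _ /eqP; rewrite eqn_exp2l // => /eqP.
move=> d; rewrite -dvdn_divisors ?expn_gt0 ?prime_gt0 //.
apply/dvdn_pfactor/mapP => // -[i].
  by move=> le_ia ->; exists i; rewrite // mem_iota.
by rewrite mem_iota => /andP[_ lt_ia] ->; exists i.
Qed.

Local Open Scope ring_scope.

Lemma big_divisors_mul (V : nmodType) (F : nat -> V) m k :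
  (0 < m)%N -> (0 < k)%N -> coprime m k ->
  \sum_(d <- divisors (m * k)) F d =
  \sum_(d1 <- divisors m) \sum_(d2 <- divisors k) F (d1 * d2)%N.
Proof.
move=> m_gt0 k_gt0 co_mk.
by rewrite (perm_big _ (divisors_mul m_gt0 k_gt0 co_mk)) big_allpairs_dep.
Qed.

Lemma big_divisors_pfactor (V : nmodType) (F : nat -> V) p a : prime p ->
  \sum_(d <- divisors (p ^ a)) F d = \sum_(i < a.+1) F (p ^ i)%N.
Proof.
move=> p_pr; rewrite (perm_big _ (divisors_pfactor _ p_pr)) big_map.
by rewrite -(subn0 a.+1) -/(index_iota 0 a.+1) big_mkord.
Qed.

Lemma big_pair_eq_except (V : zmodType) (I J : eqType) (s : seq I) (t : seq J)
    x y (F G : I -> J -> V) :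
  uniq s -> uniq t -> x \in s -> y \in t ->
  (forall i j, i \in s -> j \in t -> (i, j) != (x, y) -> F i j = G i j) ->
  \sum_(i <- s) \sum_(j <- t) F i j - \sum_(i <- s) \sum_(j <- t) G i j =
  F x y - G x y.
Proof.
move=> s_uniq t_uniq x_s y_t eqFG.
rewrite !(bigD1_seq x) //= !(bigD1_seq y) //=.
have -> : \sum_(i <- s | i != x) \sum_(j <- t) F i j =
          \sum_(i <- s | i != x) \sum_(j <- t) G i j.
  rewrite big_seq_cond [RHS]big_seq_cond; apply: eq_bigr => i /andP[i_s i_neq_x].
  by apply: eq_big_seq => j j_t; rewrite eqFG // xpair_eqE (negbTE i_neq_x).
have -> : \sum_(j <- t | j != y) F x j = \sum_(j <- t | j != y) G x j.
  rewrite big_seq_cond [RHS]big_seq_cond; apply: eq_bigr => j /andP[j_t j_neq_y].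
  by rewrite eqFG // xpair_eqE (negbTE j_neq_y) andbF.
by rewrite opprD addrACA subrr addr0 opprD addrACA subrr addr0.
Qed.

Section ArithmeticFunctions.
Variable R : realType.
Implicit Types f g : nat -> R.

Lemma dconv_mul_coprime f g m k : (0 < m)%N -> (0 < k)%N -> coprime m k ->
  dconv f g (m * k) =
  \sum_(d1 <- divisors m) \sum_(d2 <- divisors k)
    f (m %/ d1 * (k %/ d2))%N * g (d1 * d2)%N.
Proof.
move=> m_gt0 k_gt0 co_mk; rewrite /dconv big_divisors_mul //.
apply: eq_big_seq => d1; rewrite -dvdn_divisors // => d1_m.
apply: eq_big_seq => d2; rewrite -dvdn_divisors // => d2_k.
have d12_gt0 : (0 < d1 * d2)%N by rewrite muln_gt0 !(dvdn_gt0 _ d1_m, dvdn_gt0 _ d2_k).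
by rewrite -{1}(divnK d1_m) -{1}(divnK d2_k) mulnACA mulnK.
Qed.

Lemma dirichlet_inverse1 f g : f 1%N = 1 -> is_dirichlet_inverse f g -> g 1%N = 1.
Proof.
move=> f1 g_inv; have := g_inv 1%N isT.
by rewrite /dconv /= big_cons big_nil f1 mul1r addr0.
Qed.

Lemma dirichlet_inverse_multiplicative f g :
  arith_multiplicative f -> is_dirichlet_inverse f g -> arith_multiplicative g.
Proof.
move=> [f1 fM] g_inv; have g1 := dirichlet_inverse1 f1 g_inv.
split=> // m k m_gt0 k_gt0 co_mk.
have [n] := ubnP (m * k); elim: n => // n IH in m k m_gt0 k_gt0 co_mk *.
rewrite ltnS => le_mk_n.
have [->|m_neq1] := eqVneq m 1%N; first by rewrite mul1n g1 mul1r.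
have [->|k_neq1] := eqVneq k 1%N; first by rewrite muln1 g1 mulr1.
have mk_gt0 : (0 < m * k)%N by rewrite muln_gt0 m_gt0.
have dconv_mk : dconv f g (m * k) = 0.
  by rewrite g_inv // muln_eq1 (negbTE m_neq1).
have dconv_m_k : dconv f g m * dconv f g k = 0.
  by rewrite g_inv // (negbTE m_neq1) mul0r.
(* Expanding both sides over pairs of divisors (d1, d2) of (m, k), the
   induction hypothesis matches every term except the one for (m, k). *)
rewrite /dconv big_distrlr /= in dconv_m_k.
rewrite dconv_mul_coprime // in dconv_mk.
have /= := big_pair_eq_except (divisors_uniq m) (divisors_uniq k)
  (divisors_id m_gt0) (divisors_id k_gt0)
  (F := fun d1 d2 => f (m %/ d1 * (k %/ d2))%N * g (d1 * d2)%N)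
  (G := fun d1 d2 => f (m %/ d1)%N * g d1 * (f (k %/ d2)%N * g d2)).
rewrite dconv_mk dconv_m_k subrr !divnn m_gt0 k_gt0 /= f1 !mul1r => eq_except.
apply/subr0_eq/esym/eq_except.
move=> d1 d2; rewrite -!dvdn_divisors // => d1_m d2_k d_neq_mk.
have d1_gt0 := dvdn_gt0 m_gt0 d1_m; have d2_gt0 := dvdn_gt0 k_gt0 d2_k.
have lt_d_mk : (d1 * d2 < m * k)%N.
  have := dvdn_leq m_gt0 d1_m; have := dvdn_leq k_gt0 d2_k.
  move: d_neq_mk; rewrite xpair_eqE negb_and => /orP[] /eqP; nia.
have co_d : coprime d1 d2 := coprime_dvdl d1_m (coprime_dvdr d2_k co_mk).
have co_q : coprime (m %/ d1) (k %/ d2).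
  exact: coprime_dvdl (dvdn_div d1_m) (coprime_dvdr (dvdn_div d2_k) co_mk).
have lt_d_n : (d1 * d2 < n)%N := leq_trans lt_d_mk le_mk_n.
by rewrite fM ?divn_gt0 ?(dvdn_leq m_gt0) ?(dvdn_leq k_gt0) // IH // mulrACA.
Qed.

Lemma dirichlet_inverse_pfactor f g p a :
  f 1%N = 1 -> is_dirichlet_inverse f g -> prime p ->
  g (p ^ a.+1)%N = - \sum_(i < a.+1) f (p ^ (a.+1 - i))%N * g (p ^ i)%N.
Proof.
move=> f1 g_inv p_pr; have pa_gt0 : (0 < p ^ a.+1)%N by rewrite expn_gt0 prime_gt0.
have pa_neq1 : (p ^ a.+1 != 1)%N.
  by rewrite -[X in (_ != X)%N](expn0 p) eqn_exp2l ?prime_gt1.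
have := g_inv _ pa_gt0; rewrite (negbTE pa_neq1) /dconv big_divisors_pfactor //.
rewrite big_ord_recr /= divnn pa_gt0 f1 mul1r => /eqP; rewrite addrC addr_eq0 => /eqP ->.
congr (- _); apply: eq_bigr => i _.
by rewrite -expnB ?prime_gt0 // ltnW.
Qed.

Lemma dirichlet_inverse_pfactor_le f g (C gamma : R) p :
  f 1%N = 1 -> is_dirichlet_inverse f g -> prime p ->
  (forall j, (0 < j)%N -> `|f (p ^ j)%N| <= C * (p ^ j)%N%:R `^ gamma) ->
  forall a, `|g (p ^ a)%N| <= (1 + C) ^+ a * (p ^ a)%N%:R `^ gamma.
Proof.
move=> f1 g_inv p_pr f_le; elim/ltn_ind => -[_|a IH].
  by rewrite (dirichlet_inverse1 f1 g_inv) normr1 expr0 mul1r powR1.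
rewrite (dirichlet_inverse_pfactor _ f1 g_inv p_pr) normrN.
set P := (p ^ a.+1)%N%:R `^ gamma.
apply: le_trans (ler_norm_sum _ _ _) _.
apply: (@le_trans _ _ (\sum_(i < a.+1) C * (1 + C) ^+ i * P)).
  apply: ler_sum => i _; rewrite normrM.
  have <- : (p ^ (a.+1 - i))%N%:R `^ gamma * (p ^ i)%N%:R `^ gamma = P.
    by rewrite -powRM ?ler0n // -natrM -expnD subnK // ltnW.
  by rewrite mulrACA ler_pM ?IH ?f_le ?subn_gt0.
have geom : C * \sum_(i < a.+1) (1 + C) ^+ i = (1 + C) ^+ a.+1 - 1.
  by rewrite subrX1 addrAC subrr add0r.
by rewrite -big_distrl -mulr_sumr /= geom ler_wpM2r ?powR_ge0 // lerBlDr lerDl.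
Qed.

Lemma exprn_le_powR_ln2 (x y : R) a : 1 <= x -> 2 <= y ->
  x ^+ a <= (y ^+ a) `^ (ln x / ln 2).
Proof.
move=> x_ge1 y_ge2; set e := ln x / ln 2.
have ln2_gt0 : 0 < ln (2 : R) by rewrite ln_gt0 // ltr1n.
have x_eq : x = 2 `^ e.
  rewrite /powR pnatr_eq0 /= /e mulfVK ?gt_eqF // lnK //.
  by rewrite posrE (lt_le_trans ltr01 x_ge1).
have y_ge0 : 0 <= y := le_trans (ler0n _ 2) y_ge2.
rewrite -(powR_mulrn a y_ge0) powRAC powR_mulrn ?powR_ge0 //.
apply: lerXn2r; rewrite ?nnegrE ?powR_ge0 ?(le_trans ler01 x_ge1) // {1}x_eq.
apply: ge0_ler_powR; rewrite ?nnegrE ?ler0n //.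
by rewrite /e; apply: divr_ge0; [exact: ln_ge0 | exact: ltW].
Qed.

Lemma arith_multiplicative_powR (e : R) :
  arith_multiplicative (fun n => n%:R `^ e).
Proof. by split=> [|m n _ _ _]; rewrite ?powR1 // natrM powRM. Qed.

Lemma multiplicative_le_pfactor (g h : nat -> R) :
  arith_multiplicative g -> arith_multiplicative h ->
  (forall p a, prime p -> `|g (p ^ a)%N| <= h (p ^ a)%N) ->
  forall n, (0 < n)%N -> `|g n| <= h n.
Proof.
move=> [_ gM] [_ hM] le_pfactor; elim/ltn_ind => n IH n_gt0.
have [->|n_neq1] := eqVneq n 1%N; first exact: (le_pfactor 2%N 0%N).
have p_pr : prime (pdiv n) by rewrite pdiv_prime // ltn_neqAle eq_sym n_neq1.
have [m co_pm n_eq] := pfactor_coprime p_pr n_gt0.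
set p := pdiv n in p_pr co_pm n_eq; set a := logn p n in n_eq.
have a_gt0 : (0 < a)%N by rewrite logn_gt0 mem_primes p_pr n_gt0 pdiv_dvd.
have pa_gt1 : (1 < p ^ a)%N by rewrite -[X in (X < _)%N](expn0 p) ltn_exp2l ?prime_gt1.
have m_gt0 : (0 < m)%N by move: n_gt0; rewrite n_eq muln_gt0 => /andP[].
have m_lt_n : (m < n)%N by rewrite n_eq ltn_Pmulr.
have co_m_pa : coprime m (p ^ a) by rewrite coprime_sym coprimeXl.
rewrite n_eq gM ?hM ?(ltnW pa_gt1) // normrM.
by apply: ler_pM; [exact: normr_ge0 | exact: normr_ge0 | exact: IH | exact: le_pfactor].
Qed.

End ArithmeticFunctions.

Theorem corollary3p3 (R : realType) (f finv : nat -> R) (C gamma : R) :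
  arith_multiplicative f ->
  is_dirichlet_inverse f finv ->
  0 < C ->
  (forall n : nat, (2 <= n)%N -> `|f n| <= C * (n%:R `^ gamma)) ->
  forall n : nat, (2 <= n)%N ->
    `|finv n| <= n%:R `^ (gamma + ln (1 + C) / ln 2).
Proof.
move=> f_mult finv_inv C_gt0 f_le n n_ge2.
have finv_mult := dirichlet_inverse_multiplicative f_mult finv_inv.
apply: (multiplicative_le_pfactor finv_mult (arith_multiplicative_powR _)) (ltnW n_ge2).
move=> p a p_pr; have p_gt1 := prime_gt1 p_pr.
have pa_neq0 : (p ^ a)%N%:R != 0 :> R by rewrite pnatr_eq0 expn_eq0 negb_and -lt0n ltnW.
rewrite powRD ?pa_neq0 ?implybT // mulrC.
apply: le_trans (dirichlet_inverse_pfactor_le f_mult.1 finv_inv p_pr _ a) _.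
  move=> j j_gt0; apply: f_le.
  by rewrite (leq_trans p_gt1) // -[X in (X <= _)%N]expn1 leq_pexp2l // ltnW.
rewrite ler_wpM2r ?powR_ge0 // natrX exprn_le_powR_ln2 ?ler_nat //.
by rewrite lerDl ltW.
Qed.
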